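(* Let $a,b\in C\ell_{1,2}$. Then (1) $L(a)L(a^+)L(a)=L(a)$, $L(a^+)L(a)L(a^+)=L(a^+)$, $L(a)L(a^+)=(L(a)L(a^+))^T$, $L(a^+)L(a)=(L(a^+)L(a))^T$; (2) $R(a)R(a^+)R(a)=R(a)$, $R(a^+)R(a)R(a^+)=R(a^+)$, $R(a)R(a^+)=(R(a)R(a^+))^T$, $R(a^+)R(a)=(R(a^+)R(a))^T$; (3) $(L(a)R(b))^+=L(a^+)R(b^+)$, where the left side is the Moore–Penrose inverse of the real matrix $L(a)R(b)$.
   Context: $C\ell_{1,2}$ is the real Clifford algebra generated by $i_1,i_2,i_3$ with $i_1^2=1$, $i_2^2=i_3^2=-1$ and $i_ti_m=-i_mi_t$ for $t\neq m$, with real basis $e_0=1$, $e_1=i_1$, $e_2=i_2$, $e_3=i_1i_2$, $e_4=i_3$, $e_5=i_1i_3$, $e_6=i_2i_3$, $e_7=i_1i_2i_3$. For $x=\sum_{t=0}^7x_te_t$ write $\overrightarrow{x}=(x_0,\dots,x_7)^T$. $L(a)$, $R(a)$ are the real $8\times8$ matrices with $\overrightarrow{ax}=L(a)\overrightarrow{x}$, $\overrightarrow{xa}=R(a)\overrightarrow{x}$ for all $x$. The prime of $a=\sum a_te_t$ is $a'=a_0+a_1e_1-a_2e_2+a_3e_3-a_4e_4+a_5e_5-a_6e_6-a_7e_7$. For every $a$ there is a unique $x\in C\ell_{1,2}$ with $axa=a$, $xax=x$, $(ax)'=ax$, $(xa)'=xa$, denoted $a^+$ (the Moore–Penrose inverse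 of $a$). The Moore–Penrose inverse $A^+$ of a real matrix $A$ is the unique real matrix $X$ with $AXA=A$, $XAX=X$, $(AX)^T=AX$, $(XA)^T=XA$. *)

From HB Require Import structures.
From mathcomp Require Import all_boot all_order all_algebra.
From mathcomp Require Import reals.
Set Implicit Arguments. Unset Strict Implicit. Unset Printing Implicit Defensive.
Import Order.TTheory GRing.Theory Num.Theory.
Local Open Scope ring_scope.

(* Real Clifford algebra Cl_{1,2}.  An element x = sum_t x_t e_t is
   represented by its coordinate column vector  ->x = (x_0,...,x_7)^T.
   Basis index t encodes a blade by a bitmask: bit 0 <-> i1, bit 1 <-> i2,
   bit 2 <-> i3 (so e3 = i1 i2, e5 = i1 i3, e6 = i2 i3, e7 = i1 i2 i3),
   matching the paper's basis. *)
Definition cl (R : realType) := 'cV[R]_8.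

(* e_s e_t = (-1)^(cl_neg s t) e_(s xor t), computed from i1^2 = 1,
   i2^2 = i3^2 = -1 and anticommutation. *)
Definition cl_neg_table : seq (seq bool) :=
 [:: [:: false; false; false; false; false; false; false; false];
     [:: false; false; false; false; false; false; false; false];
     [:: false; true; true; false; false; true; true; false];
     [:: false; true; true; false; false; true; true; false];
     [:: false; true; true; false; true; false; false; true];
     [:: false; true; true; false; true; false; false; true];
     [:: false; false; false; false; true; true; true; true];
     [:: false; false; false; false; true; true; true; true]].

Definition cl_neg (s t : nat) : bool := nth false (nth [::] cl_neg_table s) t.
Definition cl_idx (s t : nat) : nat := Nat.lxor s t.

Definition clmul (R : realType) (a b : cl R) : cl R :=
  \col_(k < 8) \sum_(s < 8) \sum_(t < 8)
     (if cl_idx s t == k then (-1) ^+ cl_neg s t * a s 0 * b t 0 else 0).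

Definition cl_basis (R : realType) (j : 'I_8) : cl R := delta_mx j 0.

Definition Lmx (R : realType) (a : cl R) : 'M[R]_8 :=
  \matrix_(k < 8, j < 8) clmul a (cl_basis R j) k 0.
Definition Rmx (R : realType) (a : cl R) : 'M[R]_8 :=
  \matrix_(k < 8, j < 8) clmul (cl_basis R j) a k 0.

Definition cl_prime_sign : seq bool :=
  [:: false; false; true; false; true; false; true; true].
Definition cl_prime (R : realType) (a : cl R) : cl R :=
  \col_(k < 8) ((-1) ^+ nth false cl_prime_sign k * a k 0).

Definition is_cl_mp (R : realType) (a x : cl R) : Prop :=
  [/\ clmul (clmul a x) a = a, clmul (clmul x a) x = x,
      cl_prime (clmul a x) = clmul a x & cl_prime (clmul x a) = clmul x a].

Definition is_mx_mp (R : realType) n (A X : 'M[R]_n) : Prop :=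
  [/\ A *m X *m A = A, X *m A *m X = X,
      (A *m X)^T = A *m X & (X *m A)^T = X *m A].

From HB Require Import structures.
From mathcomp Require Import all_boot all_order all_algebra.
From mathcomp Require Import reals.
From Stdlib Require Import PeanoNat.
Import GRing.Theory.
Set Implicit Arguments. Unset Strict Implicit. Unset Printing Implicit Defensive.
Local Open Scope ring_scope.

(* Writing e_s e_t = (-1)^(sigma s t) e_(s xor t), the sign sigma is a
   2-cocycle on (Z/2)^3, which is exactly what makes a |-> L(a) multiplicative
   and a |-> R(a) anti-multiplicative.  Moreover the prime multiplies e_m by
   e_m^2 = (-1)^(sigma m m), i.e. it sends each blade to its inverse; since
   L(e_m) and R(e_m) are signed permutation matrices, this gives
   L(a)^T = L(a') and R(a)^T = R(a').  Hence L, R and (a, b) |-> L(a) R(b)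
   carry the four Moore-Penrose equations of Cl_{1,2} to those for matrices. *)

Lemma cl_idx_lt (s t : 'I_8) : (cl_idx s t < 8)%N.
Proof. by move: s t; do 2!case=> [[|[|[|[|[|[|[|[|//]]]]]]]] ?]. Qed.

Definition cl_xor (s t : 'I_8) : 'I_8 := Ordinal (cl_idx_lt s t).

Lemma cl_xorC (s t : 'I_8) : cl_xor s t = cl_xor t s.
Proof. by apply: val_inj; rewrite /= /cl_idx Nat.lxor_comm. Qed.

Lemma cl_xorK (t : 'I_8) : involutive (cl_xor ^~ t).
Proof.
by move=> s; apply: val_inj; rewrite /= /cl_idx Nat.lxor_assoc Nat.lxor_nilpotent Nat.lxor_0_r.
Qed.

Lemma cl_xorKC (s : 'I_8) : involutive (cl_xor s).
Proof. by move=> t; rewrite cl_xorC [cl_xor s t]cl_xorC cl_xorK. Qed.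

Lemma cl_xorA (s t u : 'I_8) : cl_xor s (cl_xor t u) = cl_xor (cl_xor s t) u.
Proof. by apply: val_inj; rewrite /= /cl_idx Nat.lxor_assoc. Qed.

Lemma cl_idx_eq (s t k : 'I_8) : (cl_idx s t == k) = (s == cl_xor k t).
Proof.
by rewrite -(inj_eq (can_inj (cl_xorK t))) cl_xorK -(inj_eq val_inj).
Qed.

Lemma cl_neg_cocycle (s t u : 'I_8) :
  cl_neg s t (+) cl_neg (cl_xor s t) u = cl_neg s (cl_xor t u) (+) cl_neg t u.
Proof. by move: s t u; do 3!case=> [[|[|[|[|[|[|[|[|//]]]]]]]] ?]. Qed.

Lemma cl_neg0l (t : 'I_8) : cl_neg 0 t = false.
Proof. by case: t => [[|[|[|[|[|[|[|[|//]]]]]]]] ?]. Qed.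

Lemma cl_neg0r (s : 'I_8) : cl_neg s 0 = false.
Proof. by case: s => [[|[|[|[|[|[|[|[|//]]]]]]]] ?]. Qed.

Lemma cl_prime_sign_sq (m : 'I_8) : nth false cl_prime_sign m = cl_neg m m.
Proof. by case: m => [[|[|[|[|[|[|[|[|//]]]]]]]] ?]. Qed.

Lemma cl_xorxx (m : 'I_8) : cl_xor m m = 0.
Proof. by apply: val_inj; rewrite /= /cl_idx Nat.lxor_nilpotent. Qed.

Lemma cl_neg_prime_l (k j : 'I_8) :
  cl_neg (cl_xor k j) k = cl_neg (cl_xor k j) j (+) nth false cl_prime_sign (cl_xor k j).
Proof.
have := cl_neg_cocycle (cl_xor k j) (cl_xor k j) j.
rewrite cl_xorxx cl_xorK cl_neg0l addbF cl_prime_sign_sq => ->.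
by rewrite addbC addbK.
Qed.

Lemma cl_neg_prime_r (k j : 'I_8) :
  cl_neg k (cl_xor k j) = cl_neg j (cl_xor k j) (+) nth false cl_prime_sign (cl_xor k j).
Proof.
have := cl_neg_cocycle k (cl_xor k j) (cl_xor k j).
rewrite cl_xorxx cl_xorKC cl_neg0r addFb -cl_prime_sign_sq => <-.
by rewrite addbC addbK.
Qed.

Lemma mx_eq_mulmx (R : pzRingType) m n (A B : 'M[R]_(m, n)) :
  (forall x : 'cV_n, A *m x = B *m x) -> A = B.
Proof.
move=> eqAB; apply/matrixP => i j.
by have := congr1 (fun v : 'cV_m => v i 0) (eqAB (delta_mx j 0)); rewrite -!colE !mxE.
Qed.

Section Matrices.

Variable R : realType.
Implicit Types a b x : cl R.

Lemma clmulE a b (k : 'I_8) :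
  clmul a b k 0 = \sum_t (-1) ^+ cl_neg (cl_xor k t) t * a (cl_xor k t) 0 * b t 0.
Proof.
rewrite mxE exchange_big /=; apply: eq_bigr => t _.
by rewrite -big_mkcond (eq_bigl _ _ (fun s => cl_idx_eq s t k)) big_pred1_eq.
Qed.

Lemma LmxE a (k j : 'I_8) :
  Lmx a k j = (-1) ^+ cl_neg (cl_xor k j) j * a (cl_xor k j) 0.
Proof.
rewrite mxE clmulE (bigD1 j) //= big1 ?addr0 => [|t /negPf tj].
  by rewrite mxE !eqxx mulr1.
by rewrite mxE tj mulr0.
Qed.

Lemma RmxE a (k j : 'I_8) :
  Rmx a k j = (-1) ^+ cl_neg j (cl_xor k j) * a (cl_xor k j) 0.
Proof.
rewrite mxE clmulE (reindex_inj (can_inj (cl_xorKC k))).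
under eq_bigr => t _ do rewrite cl_xorKC.
rewrite (bigD1 j) //= big1 ?addr0 => [|t /negPf tj].
  by rewrite mxE !eqxx mulr1.
by rewrite mxE tj mulr0 mul0r.
Qed.

Lemma clmul_Lmx a x : clmul a x = Lmx a *m x.
Proof.
by apply/matrixP => k i; rewrite ord1 clmulE mxE; apply: eq_bigr => t _; rewrite LmxE.
Qed.

Lemma clmul_Rmx a x : clmul x a = Rmx a *m x.
Proof.
apply/matrixP => k i; rewrite ord1 clmulE mxE (reindex_inj (can_inj (cl_xorKC k))).
by apply: eq_bigr => t _; rewrite RmxE cl_xorKC mulrAC.
Qed.

Lemma Lmx_mul a b : Lmx (clmul a b) = Lmx a *m Lmx b.
Proof.
apply/matrixP => k j; rewrite LmxE clmulE mulr_sumr mxE.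
rewrite (reindex_inj (can_inj (cl_xorK j))); apply: eq_bigr => t _.
have -> : cl_xor (cl_xor k j) (cl_xor t j) = cl_xor k t.
  by rewrite [cl_xor t j]cl_xorC cl_xorA cl_xorK.
have := cl_neg_cocycle (cl_xor k t) (cl_xor t j) j.
rewrite cl_xorA !cl_xorK => cocycle.
have sign : (-1) ^+ cl_neg (cl_xor k j) j * (-1) ^+ cl_neg (cl_xor k t) (cl_xor t j) =
            (-1) ^+ cl_neg (cl_xor k t) t * (-1) ^+ cl_neg (cl_xor t j) j :> R.
  by rewrite -!signr_addb addbC cocycle.
by rewrite !LmxE !mulrA sign; congr (_ * _); rewrite mulrAC.
Qed.

Lemma clmulA a b c : clmul (clmul a b) c = clmul a (clmul b c).
Proof. by rewrite clmul_Lmx Lmx_mul -mulmxA -!clmul_Lmx. Qed.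

Lemma Rmx_mul a b : Rmx (clmul a b) = Rmx b *m Rmx a.
Proof. by apply: mx_eq_mulmx => x; rewrite -mulmxA -!clmul_Rmx clmulA. Qed.

Lemma Lmx_Rmx_comm a b : Lmx a *m Rmx b = Rmx b *m Lmx a.
Proof.
by apply: mx_eq_mulmx => x; rewrite -!mulmxA -clmul_Rmx -!clmul_Lmx -clmul_Rmx clmulA.
Qed.

Lemma Lmx_tr a : (Lmx a)^T = Lmx (cl_prime a).
Proof.
apply/matrixP => k j; rewrite mxE !LmxE cl_xorC [cl_prime a _ _]mxE.
by rewrite cl_neg_prime_l signr_addb mulrA.
Qed.

Lemma Rmx_tr a : (Rmx a)^T = Rmx (cl_prime a).
Proof.
apply/matrixP => k j; rewrite mxE !RmxE cl_xorC [cl_prime a _ _]mxE.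
by rewrite cl_neg_prime_r signr_addb mulrA.
Qed.

Lemma LRmx_mul a b c d :
  Lmx a *m Rmx b *m (Lmx c *m Rmx d) = Lmx (clmul a c) *m Rmx (clmul d b).
Proof.
by rewrite Lmx_mul Rmx_mul !mulmxA -[Lmx a *m Rmx b *m Lmx c]mulmxA -Lmx_Rmx_comm !mulmxA.
Qed.

Lemma LRmx_tr a b : (Lmx a *m Rmx b)^T = Lmx (cl_prime a) *m Rmx (cl_prime b).
Proof. by rewrite trmx_mul Lmx_tr Rmx_tr Lmx_Rmx_comm. Qed.

Lemma is_mx_mp_Lmx a x : is_cl_mp a x -> is_mx_mp (Lmx a) (Lmx x).
Proof.
case=> axa xax ax' xa'; split.
- by rewrite -!Lmx_mul axa.
- by rewrite -!Lmx_mul xax.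
- by rewrite -Lmx_mul Lmx_tr ax'.
- by rewrite -Lmx_mul Lmx_tr xa'.
Qed.

Lemma is_mx_mp_Rmx a x : is_cl_mp a x -> is_mx_mp (Rmx a) (Rmx x).
Proof.
case=> axa xax ax' xa'; split.
- by rewrite -!Rmx_mul -clmulA axa.
- by rewrite -!Rmx_mul -clmulA xax.
- by rewrite -Rmx_mul Rmx_tr xa'.
- by rewrite -Rmx_mul Rmx_tr ax'.
Qed.

Lemma is_mx_mp_LRmx a b x y :
  is_cl_mp a x -> is_cl_mp b y -> is_mx_mp (Lmx a *m Rmx b) (Lmx x *m Rmx y).
Proof.
case=> axa xax ax' xa' [byb yby by' yb']; split.
- by rewrite !LRmx_mul -clmulA axa byb.
- by rewrite !LRmx_mul -clmulA xax yby.
- by rewrite LRmx_mul LRmx_tr ax' yb'.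
- by rewrite LRmx_mul LRmx_tr xa' by'.
Qed.

End Matrices.

Theorem proposition4p2 (R : realType) (a b ap bp : cl R) :
  is_cl_mp a ap -> is_cl_mp b bp ->
  [/\ [/\ Lmx a *m Lmx ap *m Lmx a = Lmx a,
          Lmx ap *m Lmx a *m Lmx ap = Lmx ap,
          Lmx a *m Lmx ap = (Lmx a *m Lmx ap)^T &
          Lmx ap *m Lmx a = (Lmx ap *m Lmx a)^T],
      [/\ Rmx a *m Rmx ap *m Rmx a = Rmx a,
          Rmx ap *m Rmx a *m Rmx ap = Rmx ap,
          Rmx a *m Rmx ap = (Rmx a *m Rmx ap)^T &
          Rmx ap *m Rmx a = (Rmx ap *m Rmx a)^T] &
      is_mx_mp (Lmx a *m Rmx b) (Lmx ap *m Rmx bp)].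
Proof.
move=> mp_a mp_b.
have [? ? La3 La4] := is_mx_mp_Lmx mp_a.
have [? ? Ra3 Ra4] := is_mx_mp_Rmx mp_a.
by split; [rewrite La3 La4 | rewrite Ra3 Ra4 | exact: is_mx_mp_LRmx].
Qed.
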